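(* Let $\mathbb{F}$ be an algebraically closed field of characteristic different from $2$. Every 2-local 1-automorphism of $H_3(\mathcal{O}(\mathbb{F}))$ is an automorphism.
   Context: $\mathcal{Q}(\mathbb{F})$ is a quaternion algebra (basis $\mathbf{1},i,j,k$, $i^2=\lambda\mathbf{1}$, $j^2=\mu\mathbf{1}$, $ij=-ji=k$, $\lambda,\mu\ne0$, involution negating $i,j,k$ coordinates). $\mathcal{O}(\mathbb{F})=\mathcal{Q}(\mathbb{F})\oplus\mathcal{Q}(\mathbb{F})$ with product $(a,b)(c,d)=(ac+\nu\bar db,\ da+b\bar c)$ for fixed nonzero $\nu\in\mathbb{F}$ and involution $\overline{(a,b)}=(\bar a,-b)$ (octonions). $H_3(\mathcal{O}(\mathbb{F}))$ is the Jordan algebra of $3\times3$ matrices $x$ over $\mathcal{O}(\mathbb{F})$ with $x_{ij}=\overline{x_{ji}}$, product $x\circ y=\frac12(xy+yx)$. A symmetry is $s$ with $s\circ s=1$, $U_s(x)=2s\circ(s\circ x)-x$. A 2-local 1-automorphism is a map $\Delta$ (not assumed linear) such that for every $x,y$ there is a symmetry $s$ with $\Delta(x)=U_s(x)$, $\Delta(y)=U_s(y)$. *)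

From mathcomp Require Import all_boot all_order all_algebra.
Set Implicit Arguments. Unset Strict Implicit. Unset Printing Implicit Defensive.
Import GRing.Theory.
Local Open Scope ring_scope.

Section Octonions.
Variable F : fieldType.
(* structure constants: i^2 = lam, j^2 = mu, and nu for the Cayley–Dickson doubling *)
Variables lam mu nu : F.

(* Quaternion algebra Q(F): a0 1 + a1 i + a2 j + a3 k, with k = ij *)
Record quat := Quat { q0 : F; q1 : F; q2 : F; q3 : F }.

Definition qadd (a b : quat) : quat :=
  Quat (q0 a + q0 b) (q1 a + q1 b) (q2 a + q2 b) (q3 a + q3 b).
Definition qopp (a : quat) : quat := Quat (- q0 a) (- q1 a) (- q2 a) (- q3 a).
Definition qscale (c : F) (a : quat) : quat :=
  Quat (c * q0 a) (c * q1 a) (c * q2 a) (c * q3 a).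
Definition qzero : quat := Quat 0 0 0 0.
Definition qone : quat := Quat 1 0 0 0.
Definition qconj (a : quat) : quat := Quat (q0 a) (- q1 a) (- q2 a) (- q3 a).
(* product determined by i^2 = lam, j^2 = mu, ij = -ji = k (bilinearity) *)
Definition qmul (a b : quat) : quat :=
  Quat (q0 a * q0 b + lam * q1 a * q1 b + mu * q2 a * q2 b - lam * mu * q3 a * q3 b)
       (q0 a * q1 b + q1 a * q0 b - mu * q2 a * q3 b + mu * q3 a * q2 b)
       (q0 a * q2 b + q2 a * q0 b + lam * q1 a * q3 b - lam * q3 a * q1 b)
       (q0 a * q3 b + q3 a * q0 b + q1 a * q2 b - q2 a * q1 b).

Record oct := Oct { ofst : quat; osnd : quat }.

Definition oadd (x y : oct) : oct := Oct (qadd (ofst x) (ofst y)) (qadd (osnd x) (osnd y)).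
Definition oopp (x : oct) : oct := Oct (qopp (ofst x)) (qopp (osnd x)).
Definition osub (x y : oct) : oct := oadd x (oopp y).
Definition oscale (c : F) (x : oct) : oct := Oct (qscale c (ofst x)) (qscale c (osnd x)).
Definition ozero : oct := Oct qzero qzero.
Definition oone : oct := Oct qone qzero.
Definition omul (x y : oct) : oct :=
  let a := ofst x in let b := osnd x in let c := ofst y in let d := osnd y in
  Oct (qadd (qmul a c) (qscale nu (qmul (qconj d) b)))
      (qadd (qmul d a) (qmul b (qconj c))).
Definition oconj (x : oct) : oct := Oct (qconj (ofst x)) (qopp (osnd x)).

Definition mat3 := 'M[oct]_3.

Definition i0 : 'I_3 := @inord 2 0.
Definition i1 : 'I_3 := @inord 2 1.
Definition i2 : 'I_3 := @inord 2 2.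

Definition madd (x y : mat3) : mat3 := \matrix_(i, j) oadd (x i j) (y i j).
Definition msub (x y : mat3) : mat3 := \matrix_(i, j) osub (x i j) (y i j).
Definition mscale (c : F) (x : mat3) : mat3 := \matrix_(i, j) oscale c (x i j).
Definition mmul (x y : mat3) : mat3 :=
  \matrix_(i, j) oadd (oadd (omul (x i i0) (y i0 j)) (omul (x i i1) (y i1 j)))
                      (omul (x i i2) (y i2 j)).
Definition mone : mat3 := \matrix_(i, j) if i == j then oone else ozero.

Definition hermitian (x : mat3) : Prop := forall i j, x i j = oconj (x j i).

Definition jmul (x y : mat3) : mat3 := mscale (2%:R)^-1 (madd (mmul x y) (mmul y x)).

Definition symmetry (s : mat3) : Prop := hermitian s /\ jmul s s = mone.

Definition Uop (s x : mat3) : mat3 := msub (mscale 2%:R (jmul s (jmul s x))) x.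

(* 2-local 1-automorphism of H_3(O(F)) (Delta only matters on H_3(O(F))) *)
Definition two_local_1_automorphism (D : mat3 -> mat3) : Prop :=
  forall x y, hermitian x -> hermitian y ->
    exists s, symmetry s /\ D x = Uop s x /\ D y = Uop s y.

Definition jordan_automorphism (D : mat3 -> mat3) : Prop :=
  [/\ forall x, hermitian x -> hermitian (D x),
      forall (c : F) x y, hermitian x -> hermitian y ->
         D (madd (mscale c x) y) = madd (mscale c (D x)) (D y),
      forall x y, hermitian x -> hermitian y -> D (jmul x y) = jmul (D x) (D y),
      forall x y, hermitian x -> hermitian y -> D x = D y -> x = y
    & forall y, hermitian y -> exists2 x, hermitian x & D x = y].

End Octonions.

From Stdlib Require Import Ring_polynom InitialRing Ring_theory ZArith BinList.
From Pilot Require Import Defs.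
From mathcomp Require Import all_boot all_order all_algebra ring.
Set Implicit Arguments. Unset Strict Implicit. Unset Printing Implicit Defensive.
Import GRing.Theory.
Local Open Scope ring_scope.

(* Coordinates identify H_3(O(F)) with F^27: three diagonal scalars and three octonions.
   In these coordinates the Jordan product becomes a commutative bilinear product with
   unit 1, and x, y |-> tr (x o y) becomes a diagonal, nondegenerate bilinear form.  The
   few polynomial identities needed (two linearisations of the Jordan identity,
   associativity of the trace form, closure of H_3 under o) are checked once and for all
   by normalising them as integer polynomials in the coordinates and in lam, mu, nu, 1/2.
   For a symmetry s, L_s^2 is an idempotent whose image and kernel are the +1 and -1
   eigenspaces of U_s, and the Peirce rules make U_s multiplicative; hence U_s also
   preserves the trace form.  A 2-local 1-automorphism D therefore preserves the trace form
   and squares.  Preserving a nondegenerate form on a finite-dimensional space forces D to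
   be linear and bijective, and by polarisation it preserves products. *)

(** * Coordinates of H_3(O) over an abstract coefficient signature *)

(* The coordinate formulas are written once over this signature and then
   evaluated both in [F] and in integer polynomials, where [clam], [cmu], [cnu]
   and [chalf] (standing for 1/2) are free variables. *)
Record coord_ops (T : Type) := CoordOps {
  cadd : T -> T -> T; cmul : T -> T -> T; copp : T -> T; czero : T; cone : T;
  clam : T; cmu : T; cnu : T; chalf : T }.

Record cquat T := CQuat { cq0 : T; cq1 : T; cq2 : T; cq3 : T }.
Record coct T := COct { cofst : cquat T; cosnd : cquat T }.
Record cherm T := CHerm { cd0 : T; cd1 : T; cd2 : T; co12 : coct T; co20 : coct T; co01 : coct T }.

Section Coordinates.
Variables (T : Type) (o : coord_ops T).
Local Notation add := (cadd o).
Local Notation mul := (cmul o).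
Local Notation opp := (copp o).
Local Notation sub a b := (add a (opp b)).

Definition cq_add (a b : cquat T) :=
  CQuat (add (cq0 a) (cq0 b)) (add (cq1 a) (cq1 b)) (add (cq2 a) (cq2 b)) (add (cq3 a) (cq3 b)).
Definition cq_scale c (a : cquat T) :=
  CQuat (mul c (cq0 a)) (mul c (cq1 a)) (mul c (cq2 a)) (mul c (cq3 a)).
Definition cq_opp (a : cquat T) := CQuat (opp (cq0 a)) (opp (cq1 a)) (opp (cq2 a)) (opp (cq3 a)).
Definition cq_conj (a : cquat T) := CQuat (cq0 a) (opp (cq1 a)) (opp (cq2 a)) (opp (cq3 a)).
Definition cq_mul (a b : cquat T) :=
  let lam := clam o in let mu := cmu o in
  CQuat (sub (add (add (mul (cq0 a) (cq0 b)) (mul (mul lam (cq1 a)) (cq1 b)))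
                  (mul (mul mu (cq2 a)) (cq2 b)))
             (mul (mul (mul lam mu) (cq3 a)) (cq3 b)))
        (add (sub (add (mul (cq0 a) (cq1 b)) (mul (cq1 a) (cq0 b))) (mul (mul mu (cq2 a)) (cq3 b)))
             (mul (mul mu (cq3 a)) (cq2 b)))
        (sub (add (add (mul (cq0 a) (cq2 b)) (mul (cq2 a) (cq0 b))) (mul (mul lam (cq1 a)) (cq3 b)))
             (mul (mul lam (cq3 a)) (cq1 b)))
        (sub (add (add (mul (cq0 a) (cq3 b)) (mul (cq3 a) (cq0 b))) (mul (cq1 a) (cq2 b)))
             (mul (cq2 a) (cq1 b))).

Definition co_add (x y : coct T) := COct (cq_add (cofst x) (cofst y)) (cq_add (cosnd x) (cosnd y)).
Definition co_opp (x : coct T) := COct (cq_opp (cofst x)) (cq_opp (cosnd x)).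
Definition co_sub x y := co_add x (co_opp y).
Definition co_scale c (x : coct T) := COct (cq_scale c (cofst x)) (cq_scale c (cosnd x)).
Definition co_conj (x : coct T) := COct (cq_conj (cofst x)) (cq_opp (cosnd x)).
Definition co_mul (x y : coct T) :=
  let a := cofst x in let b := cosnd x in let c := cofst y in let d := cosnd y in
  COct (cq_add (cq_mul a c) (cq_scale (cnu o) (cq_mul (cq_conj d) b)))
       (cq_add (cq_mul d a) (cq_mul b (cq_conj c))).
Definition co_scalar (a : T) :=
  let z := czero o in COct (CQuat a z z z) (CQuat z z z z).

Definition ch_entry (x : cherm T) (i j : nat) : coct T :=
  match i, j with
  | 0, 0 => co_scalar (cd0 x) | 1, 1 => co_scalar (cd1 x) | 2, 2 => co_scalar (cd2 x)
  | 1, 2 => co12 x | 2, 1 => co_conj (co12 x)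
  | 2, 0 => co20 x | 0, 2 => co_conj (co20 x)
  | 0, 1 => co01 x | 1, 0 => co_conj (co01 x)
  | _, _ => co_scalar (czero o) end.
Definition ch_prod_entry (x y : cherm T) (i j : nat) : coct T :=
  co_add (co_add (co_mul (ch_entry x i 0) (ch_entry y 0 j))
                 (co_mul (ch_entry x i 1) (ch_entry y 1 j)))
         (co_mul (ch_entry x i 2) (ch_entry y 2 j)).
Definition ch_anticomm_entry (x y : cherm T) i j :=
  co_add (ch_prod_entry x y i j) (ch_prod_entry y x i j).
Definition ch_jmul (x y : cherm T) : cherm T :=
  let h := chalf o in
  CHerm (mul h (cq0 (cofst (ch_anticomm_entry x y 0 0))))
        (mul h (cq0 (cofst (ch_anticomm_entry x y 1 1))))
        (mul h (cq0 (cofst (ch_anticomm_entry x y 2 2))))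
        (co_scale h (ch_anticomm_entry x y 1 2)) (co_scale h (ch_anticomm_entry x y 2 0))
        (co_scale h (ch_anticomm_entry x y 0 1)).

Definition ch_add (x y : cherm T) :=
  CHerm (add (cd0 x) (cd0 y)) (add (cd1 x) (cd1 y)) (add (cd2 x) (cd2 y))
        (co_add (co12 x) (co12 y)) (co_add (co20 x) (co20 y)) (co_add (co01 x) (co01 y)).
Definition ch_opp (x : cherm T) :=
  CHerm (opp (cd0 x)) (opp (cd1 x)) (opp (cd2 x))
        (co_opp (co12 x)) (co_opp (co20 x)) (co_opp (co01 x)).
Definition ch_sub x y := ch_add x (ch_opp y).
Definition ch_scale c (x : cherm T) :=
  CHerm (mul c (cd0 x)) (mul c (cd1 x)) (mul c (cd2 x))
        (co_scale c (co12 x)) (co_scale c (co20 x)) (co_scale c (co01 x)).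
Definition ch_one : cherm T :=
  let z := co_scalar (czero o) in CHerm (cone o) (cone o) (cone o) z z z.
Definition ch_trace (x : cherm T) := add (add (cd0 x) (cd1 x)) (cd2 x).

Definition cq_coords (a : cquat T) := [:: cq0 a; cq1 a; cq2 a; cq3 a].
Definition co_coords (a : coct T) := cq_coords (cofst a) ++ cq_coords (cosnd a).
Definition ch_coords (x : cherm T) :=
  [:: cd0 x; cd1 x; cd2 x] ++ co_coords (co12 x) ++ co_coords (co20 x) ++ co_coords (co01 x).
Definition ch_of_coords (f : nat -> T) : cherm T :=
  CHerm (f 0) (f 1) (f 2)
   (COct (CQuat (f 3) (f 4) (f 5) (f 6)) (CQuat (f 7) (f 8) (f 9) (f 10)))
   (COct (CQuat (f 11) (f 12) (f 13) (f 14)) (CQuat (f 15) (f 16) (f 17) (f 18)))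
   (COct (CQuat (f 19) (f 20) (f 21) (f 22)) (CQuat (f 23) (f 24) (f 25) (f 26))).

Local Notation P := ch_jmul.

Definition jordan_lin1_defect s x y :=
  ch_sub (ch_add (P (P (P s s) y) x) (let t := P (P (P s x) y) s in ch_add t t))
         (ch_add (P (P s s) (P y x)) (let t := P (P s x) (P y s) in ch_add t t)).
Definition jordan_lin2_defect s b c :=
  let L v := P s v in
  ch_sub (ch_add (ch_add (P c (L (L b))) (L (L (P b c)))) (P b (L (L c))))
         (ch_add (let t := P (L b) (L c) in ch_add t t) (P (P b c) (P s s))).
Definition comm_defect x y := ch_sub (P x y) (P y x).
Definition linear_defect a x y z :=
  ch_sub (P (ch_add (ch_scale a x) y) z) (ch_add (ch_scale a (P x z)) (P y z)).
Definition unit_defect x := ch_sub (P ch_one x) (ch_scale (add (chalf o) (chalf o)) x).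
Definition trace_assoc_defect a b c := sub (ch_trace (P (P a b) c)) (ch_trace (P a (P b c))).
(* [ch_jmul] keeps only the real part of the diagonal and the upper off-diagonal entries
   of x y + y x; the entry defects measure what this discards. *)
Definition entry_defect x y i j :=
  co_sub (ch_entry (P x y) i j) (co_scale (chalf o) (ch_anticomm_entry x y i j)).

(* [chalf + chalf] is written for 1 since [chalf] is a free variable in the polynomial check. *)
Definition gram_coeffs : seq T :=
  let h2 := add (chalf o) (chalf o) in let h4 := add h2 h2 in
  let lam := clam o in let mu := cmu o in let nu := cnu o in
  let oc := [:: h4; opp (mul h4 lam); opp (mul h4 mu); mul h4 (mul lam mu);
               opp (mul h4 nu); mul h4 (mul nu lam); mul h4 (mul nu mu);
               opp (mul h4 (mul nu (mul lam mu)))] in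
  [:: h2; h2; h2] ++ oc ++ oc ++ oc.
Fixpoint weighted_dot (g a b : seq T) : T :=
  match g, a, b with
  | c :: g', u :: a', v :: b' => add (mul c (mul u v)) (weighted_dot g' a' b')
  | _, _, _ => czero o end.
Definition trace_form_defect x y :=
  sub (ch_trace (P x y)) (weighted_dot gram_coeffs (ch_coords x) (ch_coords y)).
End Coordinates.

Section CoordMorphism.
Variables (T T' : Type) (o : coord_ops T) (o' : coord_ops T') (f : T -> T').
Record coord_morphism : Prop := CoordMorphism {
  morph_add : forall a b, f (cadd o a b) = cadd o' (f a) (f b);
  morph_mul : forall a b, f (cmul o a b) = cmul o' (f a) (f b);
  morph_opp : forall a, f (copp o a) = copp o' (f a);
  morph_zero : f (czero o) = czero o'; morph_one : f (cone o) = cone o';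
  morph_lam : f (clam o) = clam o'; morph_mu : f (cmu o) = cmu o';
  morph_nu : f (cnu o) = cnu o'; morph_half : f (chalf o) = chalf o' }.
Hypothesis fM : coord_morphism.
Let fadd := morph_add fM.
Let fmul := morph_mul fM.
Let fopp := morph_opp fM.
Let fzero := morph_zero fM.
Let fone := morph_one fM.
Let fnu := morph_nu fM.
Let fhalf := morph_half fM.

Definition cq_map (a : cquat T) := CQuat (f (cq0 a)) (f (cq1 a)) (f (cq2 a)) (f (cq3 a)).
Definition co_map (a : coct T) := COct (cq_map (cofst a)) (cq_map (cosnd a)).
Definition ch_map (a : cherm T) :=
  CHerm (f (cd0 a)) (f (cd1 a)) (f (cd2 a)) (co_map (co12 a)) (co_map (co20 a)) (co_map (co01 a)).
Arguments cq_map : simpl never.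
Arguments co_map : simpl never.

Let ffM := (fadd, fmul, fopp, fzero, fone, morph_lam fM, morph_mu fM, fnu, fhalf).

Lemma cq_map_add a b : cq_map (cq_add o a b) = cq_add o' (cq_map a) (cq_map b).
Proof. by rewrite /cq_map /= !ffM. Qed.
Lemma cq_map_scale c a : cq_map (cq_scale o c a) = cq_scale o' (f c) (cq_map a).
Proof. by rewrite /cq_map /= !ffM. Qed.
Lemma cq_map_opp a : cq_map (cq_opp o a) = cq_opp o' (cq_map a).
Proof. by rewrite /cq_map /= !ffM. Qed.
Lemma cq_map_conj a : cq_map (cq_conj o a) = cq_conj o' (cq_map a).
Proof. by rewrite /cq_map /= !ffM. Qed.
Lemma cq_map_mul a b : cq_map (cq_mul o a b) = cq_mul o' (cq_map a) (cq_map b).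
Proof. by rewrite /cq_map /= !ffM. Qed.

Let cq_mapE := (cq_map_add, cq_map_scale, cq_map_opp, cq_map_conj, cq_map_mul).

Lemma co_map_add a b : co_map (co_add o a b) = co_add o' (co_map a) (co_map b).
Proof. by rewrite /co_map /= !cq_mapE. Qed.
Lemma co_map_opp a : co_map (co_opp o a) = co_opp o' (co_map a).
Proof. by rewrite /co_map /= !cq_mapE. Qed.
Lemma co_map_scale c a : co_map (co_scale o c a) = co_scale o' (f c) (co_map a).
Proof. by rewrite /co_map /= !cq_mapE. Qed.
Lemma co_map_conj a : co_map (co_conj o a) = co_conj o' (co_map a).
Proof. by rewrite /co_map /= !cq_mapE. Qed.
Lemma co_map_mul a b : co_map (co_mul o a b) = co_mul o' (co_map a) (co_map b).
Proof. by rewrite /co_map /co_mul /= !cq_mapE fnu. Qed.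
Lemma co_map_scalar a : co_map (co_scalar o a) = co_scalar o' (f a).
Proof. by rewrite /co_map /cq_map /= fzero. Qed.

Let co_mapE := (co_map_add, co_map_opp, co_map_scale, co_map_conj, co_map_mul, co_map_scalar).

Lemma co_map_entry x i j : co_map (ch_entry o x i j) = ch_entry o' (ch_map x) i j.
Proof. by case: i => [|[|[|i]]]; case: j => [|[|[|j]]]; rewrite /= ?co_mapE ?fzero. Qed.
Lemma co_map_anticomm_entry x y i j :
  co_map (ch_anticomm_entry o x y i j) = ch_anticomm_entry o' (ch_map x) (ch_map y) i j.
Proof. by rewrite /ch_anticomm_entry /ch_prod_entry !co_mapE !co_map_entry. Qed.

Lemma ch_map_jmul x y : ch_map (ch_jmul o x y) = ch_jmul o' (ch_map x) (ch_map y).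
Proof.
have e X : f (cq0 (cofst X)) = cq0 (cofst (co_map X)) by [].
rewrite /ch_jmul /ch_map; cbn [cd0 cd1 cd2 co12 co20 co01].
by rewrite !fmul !e !co_map_scale !co_map_anticomm_entry fhalf.
Qed.
Lemma ch_map_add x y : ch_map (ch_add o x y) = ch_add o' (ch_map x) (ch_map y).
Proof. by rewrite /ch_map /= !fadd !co_map_add. Qed.
Lemma ch_map_sub x y : ch_map (ch_sub o x y) = ch_sub o' (ch_map x) (ch_map y).
Proof. by rewrite /ch_map /= !fadd !fopp !co_map_add !co_map_opp. Qed.
Lemma ch_map_scale c x : ch_map (ch_scale o c x) = ch_scale o' (f c) (ch_map x).
Proof. by rewrite /ch_map /= !fmul !co_map_scale. Qed.
Lemma ch_map_one : ch_map (ch_one o) = ch_one o'.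
Proof. by rewrite /ch_map /ch_one /= fone co_map_scalar fzero. Qed.
Lemma map_ch_trace x : f (ch_trace o x) = ch_trace o' (ch_map x).
Proof. by rewrite /ch_trace !fadd. Qed.

Let ch_mapE := (ch_map_sub, ch_map_add, ch_map_jmul, ch_map_scale, ch_map_one).

Lemma ch_map_jordan_lin1 s x y :
  ch_map (jordan_lin1_defect o s x y) = jordan_lin1_defect o' (ch_map s) (ch_map x) (ch_map y).
Proof. by rewrite /jordan_lin1_defect !ch_mapE. Qed.
Lemma ch_map_jordan_lin2 s x y :
  ch_map (jordan_lin2_defect o s x y) = jordan_lin2_defect o' (ch_map s) (ch_map x) (ch_map y).
Proof. by rewrite /jordan_lin2_defect !ch_mapE. Qed.
Lemma ch_map_comm x y : ch_map (comm_defect o x y) = comm_defect o' (ch_map x) (ch_map y).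
Proof. by rewrite /comm_defect !ch_mapE. Qed.
Lemma ch_map_linear a x y z :
  ch_map (linear_defect o a x y z) = linear_defect o' (f a) (ch_map x) (ch_map y) (ch_map z).
Proof. by rewrite /linear_defect !ch_mapE. Qed.
Lemma ch_map_unit x : ch_map (unit_defect o x) = unit_defect o' (ch_map x).
Proof. by rewrite /unit_defect !ch_mapE fadd fhalf. Qed.
Lemma map_trace_assoc a b c :
  f (trace_assoc_defect o a b c) = trace_assoc_defect o' (ch_map a) (ch_map b) (ch_map c).
Proof. by rewrite /trace_assoc_defect fadd fopp !map_ch_trace !ch_map_jmul. Qed.
Lemma co_map_entry_defect x y i j :
  co_map (entry_defect o x y i j) = entry_defect o' (ch_map x) (ch_map y) i j.
Proof.
by rewrite /entry_defect /co_sub co_map_add co_map_opp co_map_entry co_map_scale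
  co_map_anticomm_entry ch_map_jmul fhalf.
Qed.

Lemma map_weighted_dot g a b : size g = size a -> size a = size b ->
  f (weighted_dot o g a b) = weighted_dot o' (map f g) (map f a) (map f b).
Proof. by elim: g a b => [|c g IH] [|u a] [|v b] //= [e1] [e2]; rewrite !ffM IH. Qed.
Lemma map_gram_coeffs : map f (gram_coeffs o) = gram_coeffs o'.
Proof. by rewrite /gram_coeffs /= !ffM. Qed.
Lemma map_trace_form x y : f (trace_form_defect o x y) = trace_form_defect o' (ch_map x) (ch_map y).
Proof.
rewrite /trace_form_defect fadd fopp map_ch_trace ch_map_jmul.
by rewrite map_weighted_dot // map_gram_coeffs.
Qed.
End CoordMorphism.

(** * The coordinate identities, checked on integer polynomials *)

Definition zpol := Pol Z.
Definition pvar (i : nat) : zpol := mk_X Z0 (Zpos xH) (Pos.of_succ_nat i).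
(* Variables 0-26, 27-53 and 54-80 are the coordinates of three generic elements;
   81-85 stand for lam, mu, nu, 1/2 and a scalar. *)
Definition pol_ops : coord_ops zpol :=
  CoordOps (Padd Z0 Z.add Z.eqb) (Pmul Z0 (Zpos xH) Z.add Z.mul Z.eqb) (Popp Z.opp)
           (Pc Z0) (Pc (Zpos xH)) (pvar 81) (pvar 82) (pvar 83) (pvar 84).
Definition generic_herm (k : nat) : cherm zpol := ch_of_coords (fun i => pvar (i + k)).
Definition pol_is0 (p : zpol) := if p is Pc c then Z.eqb c Z0 else false.
Definition ch_is0 (x : cherm zpol) := all pol_is0 (ch_coords x).
Definition co_is0 (x : coct zpol) := all pol_is0 (co_coords x).

Local Notation gX := (generic_herm 0).
Local Notation gY := (generic_herm 27).
Local Notation gZ := (generic_herm 54).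

Lemma jordan_lin1_zpol : ch_is0 (jordan_lin1_defect pol_ops gX gY gZ). Proof. by vm_compute. Qed.
Lemma jordan_lin2_zpol : ch_is0 (jordan_lin2_defect pol_ops gX gY gZ). Proof. by vm_compute. Qed.
Lemma comm_zpol : ch_is0 (comm_defect pol_ops gX gY). Proof. by vm_compute. Qed.
Lemma linear_zpol : ch_is0 (linear_defect pol_ops (pvar 85) gX gY gZ). Proof. by vm_compute. Qed.
Lemma unit_zpol : ch_is0 (unit_defect pol_ops gX). Proof. by vm_compute. Qed.
Lemma trace_assoc_zpol : pol_is0 (trace_assoc_defect pol_ops gX gY gZ). Proof. by vm_compute. Qed.
Lemma trace_form_zpol : pol_is0 (trace_form_defect pol_ops gX gY). Proof. by vm_compute. Qed.
Lemma entry_zpol : all (fun ij => co_is0 (entry_defect pol_ops gX gY ij.1 ij.2))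
  [:: (0, 0); (0, 1); (0, 2); (1, 0); (1, 1); (1, 2); (2, 0); (2, 1); (2, 2)]%N.
Proof. by vm_compute. Qed.

Lemma binlist_nth (A : Type) (d : A) (l : seq A) i :
  BinList.nth d (Pos.of_succ_nat i) l = nth d l i.
Proof.
have hd_jump k s : List.hd d (jump (Pos.of_succ_nat k) s) = nth d s k.+1.
  elim: k s => [|k IH] s; first by case: s => [|? []].
  by rewrite /= jump_succ /= jump_tl IH; case: s.
by rewrite -[l]/(List.tl (d :: l)) nth_jump hd_jump.
Qed.

Section Evaluation.
Variables (F : fieldType) (lam mu nu : F).

Definition field_ops : coord_ops F := CoordOps +%R *%R -%R 0 1 lam mu nu 2%:R^-1.

Lemma field_ring_theory : @ring_theory F 0 1 +%R *%R (fun x y => x - y) -%R eq.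
Proof.
split => //; [exact: add0r | exact: addrC | exact: addrA | exact: mul1r | exact: mulrC
  | exact: mulrA | exact: mulrDl | move=> x; exact: subrr].
Qed.

Let Fsetoid := Eqsth F.
Let Fext := Eq_ext (@GRing.add F) (@GRing.mul F) (@GRing.opp F).
Let Fart := Rth_ARth Fsetoid Fext field_ring_theory.
Let Zmorph := gen_phiZ_morph Fsetoid Fext field_ring_theory.

Definition pol_eval (env : seq F) (p : zpol) : F :=
  Pphi 0 +%R *%R (gen_phiZ 0 1 +%R *%R -%R) env p.

Lemma pol_eval_var env i : pol_eval env (pvar i) = nth 0 env i.
Proof. by rewrite /pol_eval /pvar -(mkX_ok Fsetoid Fext Fart Zmorph) binlist_nth. Qed.

Lemma pol_eval_is0 env p : pol_is0 p -> pol_eval env p = 0.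
Proof. by case: p => // c /= /Z.eqb_eq ->. Qed.

Lemma map_pol_eval_is0 env s : all pol_is0 s -> map (pol_eval env) s = map (fun=> 0) s.
Proof. by elim: s => //= p s IH /andP[/(pol_eval_is0 env) -> /IH ->]. Qed.

Definition ch_zero : cherm F := ch_of_coords (fun _ => 0).

Lemma ch_coords_inj : injective (@ch_coords F).
Proof.
case=> ? ? ? [[? ? ? ?] [? ? ? ?]] [[? ? ? ?] [? ? ? ?]] [[? ? ? ?] [? ? ? ?]].
case=> ? ? ? [[? ? ? ?] [? ? ? ?]] [[? ? ? ?] [? ? ? ?]] [[? ? ? ?] [? ? ? ?]].
by case=> *; subst.
Qed.
Lemma co_coords_inj : injective (@co_coords F).
Proof. by case=> [[? ? ? ?] [? ? ? ?]] [[? ? ? ?] [? ? ? ?]] [] *; subst. Qed.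

Lemma ch_is0_eval env E : ch_is0 E -> ch_map (pol_eval env) E = ch_zero.
Proof.
move=> E0; apply: ch_coords_inj.
have -> : ch_coords (ch_map (pol_eval env) E) = map (pol_eval env) (ch_coords E) by [].
by rewrite map_pol_eval_is0.
Qed.

Definition co_zero : coct F := co_scalar field_ops 0.

Lemma co_is0_eval env E : co_is0 E -> co_map (pol_eval env) E = co_zero.
Proof.
move=> E0; apply: co_coords_inj.
have -> : co_coords (co_map (pol_eval env) E) = map (pol_eval env) (co_coords E) by [].
by rewrite map_pol_eval_is0.
Qed.

Definition eval_env (x y z : cherm F) (a : F) :=
  ch_coords x ++ ch_coords y ++ ch_coords z ++ [:: lam; mu; nu; 2%:R^-1; a].

Lemma eval_generic x y z a : let env := eval_env x y z a in
  [/\ ch_map (pol_eval env) (generic_herm 0) = x, ch_map (pol_eval env) (generic_herm 27) = y,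
      ch_map (pol_eval env) (generic_herm 54) = z & pol_eval env (pvar 85) = a].
Proof.
rewrite /generic_herm /ch_of_coords /ch_map /co_map /cq_map /= !mul1r !addr0.
by case: x y z => ? ? ? [[? ? ? ?] [? ? ? ?]] [[? ? ? ?] [? ? ? ?]] [[? ? ? ?] [? ? ? ?]]
  [? ? ? [[? ? ? ?] [? ? ? ?]] [[? ? ? ?] [? ? ? ?]] [[? ? ? ?] [? ? ? ?]]]
  [? ? ? [[? ? ? ?] [? ? ? ?]] [[? ? ? ?] [? ? ? ?]] [[? ? ? ?] [? ? ? ?]]].
Qed.

Lemma pol_eval_morphism x y z a :
  coord_morphism pol_ops field_ops (pol_eval (eval_env x y z a)).
Proof.
have nth_const i :
    pol_eval (eval_env x y z a) (pvar (81 + i)) = nth 0 [:: lam; mu; nu; 2%:R^-1; a] i.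
  by rewrite pol_eval_var /eval_env !catA nth_cat !size_cat ltnNge leq_addr addKn.
split.
- move=> *; exact: (Padd_ok Fsetoid Fext Fart Zmorph).
- move=> *; exact: (Pmul_ok Fsetoid Fext Fart Zmorph).
- move=> *; exact: (Popp_ok Fsetoid Fext Fart Zmorph).
- by [].
- by [].
- exact: (nth_const 0%N).
- exact: (nth_const 1%N).
- exact: (nth_const 2%N).
- exact: (nth_const 3%N).
Qed.

Local Notation fops := field_ops.

Lemma jordan_lin1_field s x y : jordan_lin1_defect fops s x y = ch_zero.
Proof.
have [eS eX eY _] := eval_generic s x y 0.
have := ch_is0_eval (eval_env s x y 0) jordan_lin1_zpol.
by rewrite (ch_map_jordan_lin1 (pol_eval_morphism _ _ _ _)) eS eX eY.
Qed.
Lemma jordan_lin2_field s x y : jordan_lin2_defect fops s x y = ch_zero.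
Proof.
have [eS eX eY _] := eval_generic s x y 0.
have := ch_is0_eval (eval_env s x y 0) jordan_lin2_zpol.
by rewrite (ch_map_jordan_lin2 (pol_eval_morphism _ _ _ _)) eS eX eY.
Qed.
Lemma comm_field x y : comm_defect fops x y = ch_zero.
Proof.
have [eX eY _ _] := eval_generic x y ch_zero 0.
have := ch_is0_eval (eval_env x y ch_zero 0) comm_zpol.
by rewrite (ch_map_comm (pol_eval_morphism _ _ _ _)) eX eY.
Qed.
Lemma linear_field a x y z : linear_defect fops a x y z = ch_zero.
Proof.
have [eX eY eZ eA] := eval_generic x y z a.
have := ch_is0_eval (eval_env x y z a) linear_zpol.
by rewrite (ch_map_linear (pol_eval_morphism _ _ _ _)) eX eY eZ eA.
Qed.
Lemma unit_field x : unit_defect fops x = ch_zero.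
Proof.
have [eX _ _ _] := eval_generic x ch_zero ch_zero 0.
have := ch_is0_eval (eval_env x ch_zero ch_zero 0) unit_zpol.
by rewrite (ch_map_unit (pol_eval_morphism _ _ _ _)) eX.
Qed.
Lemma trace_assoc_field x y z : trace_assoc_defect fops x y z = 0.
Proof.
have [eX eY eZ _] := eval_generic x y z 0.
have := pol_eval_is0 (eval_env x y z 0) trace_assoc_zpol.
by rewrite (map_trace_assoc (pol_eval_morphism _ _ _ _)) eX eY eZ.
Qed.
Lemma trace_form_field x y : trace_form_defect fops x y = 0.
Proof.
have [eX eY _ _] := eval_generic x y ch_zero 0.
have := pol_eval_is0 (eval_env x y ch_zero 0) trace_form_zpol.
by rewrite (map_trace_form (pol_eval_morphism _ _ _ _)) eX eY.
Qed.
Lemma entry_field x y i j : (i < 3)%N -> (j < 3)%N -> entry_defect fops x y i j = co_zero.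
Proof.
move=> lt_i3 lt_j3; have [eX eY _ _] := eval_generic x y ch_zero 0.
have E0 : co_is0 (entry_defect pol_ops (generic_herm 0) (generic_herm 27) i j).
  have /allP/(_ (i, j)) := entry_zpol; apply.
  by case: i lt_i3 => [|[|[|]]] //; case: j lt_j3 => [|[|[|]]].
have := co_is0_eval (eval_env x y ch_zero 0) E0.
by rewrite (co_map_entry_defect (pol_eval_morphism _ _ _ _)) eX eY.
Qed.
End Evaluation.

Section Rows.
Variables (F : fieldType) (lam mu nu : F).
Hypothesis two_neq0 : (2%:R : F) != 0.
Hypotheses (lam0 : lam != 0) (mu0 : mu != 0) (nu0 : nu != 0).
Local Notation fops := (field_ops lam mu nu).
Local Notation V := 'rV[F]_27.

Definition row_of_ch (x : cherm F) : V := \row_(k < 27) nth 0 (ch_coords x) k.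
Definition ch_of_row (r : V) : cherm F := ch_of_coords (fun k => r 0 (inord k)).

Lemma ch_coords_of_coords (f : nat -> F) : ch_coords (ch_of_coords f) = map f (iota 0 27).
Proof. by []. Qed.

Lemma row_of_chK : cancel row_of_ch ch_of_row.
Proof.
move=> x; apply: ch_coords_inj; rewrite ch_coords_of_coords.
have -> : ch_coords x = map (nth 0 (ch_coords x)) (iota 0 27).
  by case: x => ? ? ? [[? ? ? ?] [? ? ? ?]] [[? ? ? ?] [? ? ? ?]] [[? ? ? ?] [? ? ? ?]].
apply/eq_in_map => k; rewrite mem_iota add0n => /andP[_ lt_k27].
by rewrite mxE inordK.
Qed.
Lemma ch_of_rowK : cancel ch_of_row row_of_ch.
Proof.
move=> r; apply/rowP => k; rewrite mxE ch_coords_of_coords (nth_map 0) ?size_iota //.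
by rewrite nth_iota // add0n inord_val.
Qed.
Lemma row_of_ch_inj : injective row_of_ch. Proof. exact: can_inj row_of_chK. Qed.
Lemma ch_of_row_inj : injective ch_of_row. Proof. exact: can_inj ch_of_rowK. Qed.

Lemma ch_of_row_lin c u v :
  ch_of_row (c *: u + v) = ch_add fops (ch_scale fops c (ch_of_row u)) (ch_of_row v).
Proof. by rewrite /ch_of_row /ch_of_coords !mxE. Qed.
Lemma ch_of_row_add u v : ch_of_row (u + v) = ch_add fops (ch_of_row u) (ch_of_row v).
Proof. by rewrite /ch_of_row /ch_of_coords !mxE. Qed.
Lemma ch_of_row_scale c u : ch_of_row (c *: u) = ch_scale fops c (ch_of_row u).
Proof. by rewrite /ch_of_row /ch_of_coords !mxE. Qed.
Lemma ch_of_row_opp u : ch_of_row (- u) = ch_opp fops (ch_of_row u).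
Proof. by rewrite /ch_of_row /ch_of_coords !mxE. Qed.
Lemma ch_of_row0 : ch_of_row 0 = ch_zero F.
Proof. by rewrite /ch_of_row /ch_of_coords !mxE. Qed.

Lemma row_of_ch_lin c x y :
  row_of_ch (ch_add fops (ch_scale fops c x) y) = c *: row_of_ch x + row_of_ch y.
Proof. by apply: ch_of_row_inj; rewrite ch_of_row_lin !row_of_chK. Qed.
Lemma row_of_ch_scale c x : row_of_ch (ch_scale fops c x) = c *: row_of_ch x.
Proof. by apply: ch_of_row_inj; rewrite ch_of_row_scale !row_of_chK. Qed.
Lemma row_of_ch_sub x y : row_of_ch (ch_sub fops x y) = row_of_ch x - row_of_ch y.
Proof. by apply: ch_of_row_inj; rewrite ch_of_row_add ch_of_row_opp !row_of_chK. Qed.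
Lemma row_of_ch0 : row_of_ch (ch_zero F) = 0.
Proof. by apply: ch_of_row_inj; rewrite ch_of_row0 row_of_chK. Qed.

Lemma ch_sub_eq0 x y : ch_sub fops x y = ch_zero F -> x = y.
Proof.
by move/(congr1 row_of_ch); rewrite row_of_ch_sub row_of_ch0 => /subr0_eq /row_of_ch_inj.
Qed.

(* Locked as a function, so that conversion compares the arguments of two products
   instead of unfolding them into their coordinate polynomials. *)
Definition jprod : V -> V -> V :=
  locked (fun u v => row_of_ch (ch_jmul fops (ch_of_row u) (ch_of_row v))).
Definition jone : V := row_of_ch (ch_one fops).
Definition jtrace (u : V) : F := ch_trace fops (ch_of_row u).

Lemma jprodE u v : jprod u v = row_of_ch (ch_jmul fops (ch_of_row u) (ch_of_row v)).
Proof. by rewrite /jprod -lock. Qed.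

Lemma ch_jmul_of_row u v : ch_jmul fops (ch_of_row u) (ch_of_row v) = ch_of_row (jprod u v).
Proof. by rewrite jprodE row_of_chK. Qed.

Lemma jprodC u v : jprod u v = jprod v u.
Proof. by rewrite !jprodE (ch_sub_eq0 (comm_field _ _ _ _ _)). Qed.
Lemma jprodZDl c u v w : jprod (c *: u + v) w = c *: jprod u w + jprod v w.
Proof.
by rewrite !jprodE ch_of_row_lin (ch_sub_eq0 (linear_field _ _ _ _ _ _ _)) row_of_ch_lin.
Qed.
Lemma jprod1l u : jprod jone u = u.
Proof.
have two_halves : (2%:R^-1 + 2%:R^-1 : F) = 1 by field.
rewrite jprodE /jone row_of_chK (ch_sub_eq0 (unit_field _ _ _ _)) /= two_halves.
have -> : ch_scale fops 1 (ch_of_row u) = ch_of_row u by rewrite -ch_of_row_scale scale1r.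
exact: ch_of_rowK.
Qed.

Lemma jprod_jordan_lin1 s x y :
  jprod (jprod (jprod s s) y) x + (jprod (jprod (jprod s x) y) s + jprod (jprod (jprod s x) y) s)
  = jprod (jprod s s) (jprod y x) + (jprod (jprod s x) (jprod y s) + jprod (jprod s x) (jprod y s)).
Proof.
have := ch_sub_eq0 (jordan_lin1_field lam mu nu (ch_of_row s) (ch_of_row x) (ch_of_row y)).
rewrite /jordan_lin1_defect; cbv zeta.
by rewrite !ch_jmul_of_row -!ch_of_row_add => /ch_of_row_inj.
Qed.
Lemma jprod_jordan_lin2 s b c :
  jprod c (jprod s (jprod s b)) + jprod s (jprod s (jprod b c)) + jprod b (jprod s (jprod s c))
  = (jprod (jprod s b) (jprod s c) + jprod (jprod s b) (jprod s c)) + jprod (jprod b c) (jprod s s).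
Proof.
have := ch_sub_eq0 (jordan_lin2_field lam mu nu (ch_of_row s) (ch_of_row b) (ch_of_row c)).
rewrite /jordan_lin2_defect; cbv zeta.
by rewrite !ch_jmul_of_row -!ch_of_row_add => /ch_of_row_inj.
Qed.

Lemma jtraceZD c u v : jtrace (c *: u + v) = c * jtrace u + jtrace v.
Proof. rewrite /jtrace ch_of_row_lin /ch_trace /=; ring. Qed.
Lemma jtrace_assoc a b c : jtrace (jprod (jprod a b) c) = jtrace (jprod a (jprod b c)).
Proof.
have := trace_assoc_field lam mu nu (ch_of_row a) (ch_of_row b) (ch_of_row c).
by rewrite /trace_assoc_defect !ch_jmul_of_row => /subr0_eq.
Qed.

Definition gram_row : V := \row_(k < 27) nth 0 (gram_coeffs fops) k.
Definition trace_form (u v : V) : F := (u *m diag_mx gram_row *m v^T) 0 0.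

Lemma trace_formE u v : trace_form u v = \sum_(k < 27) u 0 k * gram_row 0 k * v 0 k.
Proof. by rewrite /trace_form mxE; apply: eq_bigr => k _; rewrite mul_mx_diag !mxE. Qed.

Lemma weighted_dotE (g a b : seq F) : size g = size a -> size a = size b ->
  weighted_dot fops g a b = \sum_(k < size g) nth 0 g k * (nth 0 a k * nth 0 b k).
Proof.
elim: g a b => [|c g IH] [|u a] [|v b] //=; first by rewrite big_ord0.
by move=> [e1] [e2]; rewrite big_ord_recl /= IH.
Qed.

Lemma jtrace_jprod u v : jtrace (jprod u v) = trace_form u v.
Proof.
have := trace_form_field lam mu nu (ch_of_row u) (ch_of_row v).
rewrite /trace_form_defect ch_jmul_of_row /jtrace => /subr0_eq ->.
rewrite weighted_dotE // trace_formE; apply: eq_bigr => k _.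
rewrite /ch_of_row !ch_coords_of_coords !(nth_map 0) ?size_iota //.
rewrite nth_iota // add0n inord_val !mxE.
by rewrite mulrA [_ * u 0 k]mulrC.
Qed.

Lemma trace_formZDl c u v w : trace_form (c *: u + v) w = c * trace_form u w + trace_form v w.
Proof.
by rewrite !trace_formE mulr_sumr -big_split; apply: eq_bigr => k _; rewrite !mxE /=; ring.
Qed.
Lemma trace_formBl u v w : trace_form (u - v) w = trace_form u w - trace_form v w.
Proof. by rewrite !trace_formE -sumrB; apply: eq_bigr => k _; rewrite !mxE; ring. Qed.
Lemma trace_form_deltar u i : trace_form u (delta_mx 0 i) = u 0 i * gram_row 0 i.
Proof.
rewrite trace_formE (bigD1 i) //= big1 ?addr0 => [|k /negbTE ne_ki];
  by rewrite !mxE ?eqxx ?ne_ki /= ?mulr1 ?mulr0.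
Qed.

Lemma gram_row_neq0 k : gram_row 0 k != 0.
Proof.
rewrite mxE.
have two_halves : (2%:R^-1 + 2%:R^-1 : F) = 1 by field.
have : all (fun g => g != 0) (gram_coeffs fops).
  have two1 : (1 + 1 : F) != 0 by [].
  rewrite /gram_coeffs /= two_halves !(oppr_eq0, mulf_eq0, negb_or).
  by rewrite lam0 mu0 nu0 two1 oner_eq0.
by move/all_nthP; apply; rewrite size_cat.
Qed.

Lemma trace_form_nondeg w : (forall i, trace_form w (delta_mx 0 i) = 0) -> w = 0.
Proof.
move=> w0; apply/rowP => k; apply/eqP; rewrite mxE.
by have /eqP := w0 k; rewrite trace_form_deltar mulf_eq0 (negbTE (gram_row_neq0 k)) orbF.
Qed.
End Rows.

(** * The quadratic operator of a symmetry *)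

Section JordanSymmetry.
Variables (K : fieldType) (V : lmodType K) (jm : V -> V -> V) (one : V) (tr : V -> K).
Hypothesis two_neq0 : (2%:R : K) != 0.
Hypothesis jmC : forall u v, jm u v = jm v u.
Hypothesis jmZDl : forall c u v w, jm (c *: u + v) w = c *: jm u w + jm v w.
Hypothesis jm1l : forall u, jm one u = u.
Hypothesis jordan_lin1 : forall s x y,
  jm (jm (jm s s) y) x + (jm (jm (jm s x) y) s + jm (jm (jm s x) y) s)
  = jm (jm s s) (jm y x) + (jm (jm s x) (jm y s) + jm (jm s x) (jm y s)).
Hypothesis jordan_lin2 : forall s b c,
  jm c (jm s (jm s b)) + jm s (jm s (jm b c)) + jm b (jm s (jm s c))
  = (jm (jm s b) (jm s c) + jm (jm s b) (jm s c)) + jm (jm b c) (jm s s).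
Hypothesis trZD : forall c u v, tr (c *: u + v) = c * tr u + tr v.
Hypothesis tr_assoc : forall a b c, tr (jm (jm a b) c) = tr (jm a (jm b c)).

Lemma jm0l w : jm 0 w = 0.
Proof. by apply/(addrI (jm 0 w)); have := jmZDl 1 0 0 w; rewrite !scale1r !addr0. Qed.
Lemma jmDl u v w : jm (u + v) w = jm u w + jm v w.
Proof. by rewrite -[u]scale1r jmZDl !scale1r. Qed.
Lemma jmZl c u w : jm (c *: u) w = c *: jm u w.
Proof. by rewrite -[c *: u]addr0 jmZDl jm0l addr0. Qed.
Lemma jmNl u w : jm (- u) w = - jm u w.
Proof. by rewrite -scaleN1r jmZl scaleN1r. Qed.
Lemma jmBl u v w : jm (u - v) w = jm u w - jm v w.
Proof. by rewrite jmDl jmNl. Qed.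
Lemma jm0r w : jm w 0 = 0.
Proof. by rewrite jmC jm0l. Qed.
Lemma jmDr u v w : jm w (u + v) = jm w u + jm w v.
Proof. by rewrite jmC jmDl -!(jmC w). Qed.
Lemma jmNr u w : jm w (- u) = - jm w u.
Proof. by rewrite jmC jmNl jmC. Qed.
Lemma jmBr u v w : jm w (u - v) = jm w u - jm w v.
Proof. by rewrite jmDr jmNr. Qed.

Lemma double_inj (a b : V) : a + a = b + b -> a = b.
Proof.
rewrite -!mulr2n -!scaler_nat => /(congr1 (fun v => (2%:R)^-1 *: v)).
by rewrite !scalerA mulVf // !scale1r.
Qed.

Lemma double_mid_inj (a b d e : V) : a + b + (b + d) = a + e + (e + d) -> b = e.
Proof. rewrite -!addrA => /addrI; rewrite !addrA => /addIr; exact: double_inj. Qed.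

(* Polarisation: compare f ((a + b)^2) with f a^2 + f b^2. *)
Lemma sq_morph_mul (f : V -> V) : {morph f : a b / a + b} ->
  (forall a, f (jm a a) = jm (f a) (f a)) -> forall a b, f (jm a b) = jm (f a) (f b).
Proof.
move=> fD fsq a b; have := fsq (a + b).
rewrite jmDl !jmDr !fD !fsq [jm b a]jmC jmDl !jmDr [jm (f b) (f a)]jmC.
exact: double_mid_inj.
Qed.

Variable s : V.
Hypothesis s_sym : jm s s = one.
Local Notation L := (jm s).

Lemma L_jm_L x y : L (jm (L x) y) = jm (L x) (L y).
Proof.
have := jordan_lin1 s x y; rewrite s_sym !jm1l => /addrI.
by rewrite [jm (jm (jm s x) y) s]jmC [jm y s]jmC; apply: double_inj.
Qed.
Lemma L3 x : L (L (L x)) = L x.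
Proof. by have := L_jm_L x s; rewrite s_sym [jm (L x) one]jmC jm1l [jm (L x) s]jmC. Qed.
Lemma jordan_lin2_sym b c :
  jm c (L (L b)) + L (L (jm b c)) + jm b (L (L c)) = (jm (L b) (L c) + jm (L b) (L c)) + jm b c.
Proof. by have := jordan_lin2 s b c; rewrite s_sym [jm (jm b c) one]jmC jm1l. Qed.

Definition Usym x := locked ((L (L x) + L (L x)) - x).
Lemma UsymE x : Usym x = (L (L x) + L (L x)) - x. Proof. by rewrite /Usym -lock. Qed.

Lemma Usym_add a b : Usym (a + b) = Usym a + Usym b.
Proof.
by rewrite !UsymE !jmDr [L (L a) + L (L b) + _]addrACA opprD [_ + (- a + - b)]addrACA.
Qed.

(* L^2 is idempotent (L^3 = L), so V splits into its image, where U_s = 1, and the kernel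
   of L, where U_s = -1; the Peirce rules below say how the square respects this. *)
Lemma L_jm_LL_ker x z : L z = 0 -> L (jm (L (L x)) z) = 0.
Proof. by move=> Lz0; rewrite L_jm_L Lz0 jm0r. Qed.
Lemma LL_jm_ker z : L z = 0 -> L (L (jm z z)) = jm z z.
Proof. by move=> Lz0; have := jordan_lin2_sym z z; rewrite Lz0 !jm0r add0r addr0 !add0r. Qed.
Lemma LL_jm_LL x (w := L (L x)) : L (L (jm w w)) = jm w w.
Proof.
have LLw : L (L w) = w by rewrite /w L3.
have e : L (L (jm w w)) = jm (L w) (L w) by rewrite L_jm_L [jm w (L w)]jmC L_jm_L.
by have := jordan_lin2_sym w w; rewrite LLw e => /addIr; rewrite addrC => /addrI.
Qed.

Lemma Usym_sq x : Usym (jm x x) = jm (Usym x) (Usym x).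
Proof.
set w := L (L x); set z := x - w.
have Lz0 : L z = 0 by rewrite /z jmBr /w L3 subrr.
have hx : x = w + z by rewrite /z addrC subrK.
have hUx : Usym x = w - z by rewrite !UsymE -/w hx opprD addrA addrK.
have Uww : Usym (jm w w) = jm w w by rewrite UsymE LL_jm_LL addrK.
have Uwz : Usym (jm w z) = - jm w z by rewrite UsymE L_jm_LL_ker // jm0r addr0 add0r.
have Uzz : Usym (jm z z) = jm z z by rewrite UsymE LL_jm_ker // addrK.
clearbody w z; rewrite hUx {1 2}hx jmDl !jmDr [jm z w]jmC !Usym_add Uww Uwz Uzz.
by rewrite jmNr !jmBl [jm z w]jmC opprB [- jm w z + _]addrC.
Qed.

Lemma Usym_jm x y : Usym (jm x y) = jm (Usym x) (Usym y).
Proof. by apply: sq_morph_mul => //; [exact: Usym_add | exact: Usym_sq]. Qed.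

Lemma tr_Usym w : tr (Usym w) = tr w.
Proof.
have trD a b : tr (a + b) = tr a + tr b by rewrite -[a]scale1r trZD mul1r scale1r.
have tr0 : tr 0 = 0.
  have := trZD 1 0 0; rewrite scale1r addr0 mul1r => /eqP.
  by rewrite -subr_eq subrr eq_sym => /eqP.
have trN a : tr (- a) = - tr a by rewrite -scaleN1r -[_ *: a]addr0 trZD tr0 addr0 mulN1r.
have trLL : tr (L (L w)) = tr w by rewrite -tr_assoc s_sym jm1l.
by rewrite UsymE trD trN trD trLL addrK.
Qed.

Lemma tr_Usym_jm x y : tr (jm (Usym x) (Usym y)) = tr (jm x y).
Proof. by rewrite -Usym_jm tr_Usym. Qed.
End JordanSymmetry.

Section HermitianCoordinates.
Variables (F : fieldType) (lam mu nu : F).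
Hypothesis two_neq0 : (2%:R : F) != 0.
Local Notation fops := (field_ops lam mu nu).
Local Notation mat3 := (mat3 F).

Definition quat_of_cq (a : cquat F) : quat F := Quat (cq0 a) (cq1 a) (cq2 a) (cq3 a).
Definition oct_of_co (x : coct F) : oct F := Oct (quat_of_cq (cofst x)) (quat_of_cq (cosnd x)).
Definition co_of_oct (u : oct F) : coct F :=
  COct (CQuat (q0 (ofst u)) (q1 (ofst u)) (q2 (ofst u)) (q3 (ofst u)))
       (CQuat (q0 (osnd u)) (q1 (osnd u)) (q2 (osnd u)) (q3 (osnd u))).
Definition herm_of_ch (x : cherm F) : mat3 :=
  \matrix_(i, j) oct_of_co (ch_entry fops x i j).
Definition ch_of_herm (X : mat3) : cherm F :=
  CHerm (q0 (ofst (X i0 i0))) (q0 (ofst (X i1 i1))) (q0 (ofst (X i2 i2)))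
        (co_of_oct (X i1 i2)) (co_of_oct (X i2 i0)) (co_of_oct (X i0 i1)).

Lemma val_i0 : nat_of_ord i0 = 0%N. Proof. by rewrite /i0 inordK. Qed.
Lemma val_i1 : nat_of_ord i1 = 1%N. Proof. by rewrite /i1 inordK. Qed.
Lemma val_i2 : nat_of_ord i2 = 2%N. Proof. by rewrite /i2 inordK. Qed.

Lemma ord3P (i : 'I_3) : [\/ i = i0, i = i1 | i = i2].
Proof.
case: i => [[|[|[|k]]] lt_i3] //.
- by constructor 1; apply: val_inj; rewrite /= val_i0.
- by constructor 2; apply: val_inj; rewrite /= val_i1.
- by constructor 3; apply: val_inj; rewrite /= val_i2.
Qed.

Lemma co_of_octK : cancel co_of_oct oct_of_co. Proof. by case=> [[? ? ? ?] [? ? ? ?]]. Qed.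
Lemma oct_of_coK : cancel oct_of_co co_of_oct. Proof. by case=> [[? ? ? ?] [? ? ? ?]]. Qed.
Lemma oct_of_co_conj a : oct_of_co (co_conj fops a) = oconj (oct_of_co a).
Proof. by case: a => [[? ? ? ?] [? ? ? ?]]. Qed.
Lemma oconjK : involutive (@oconj F).
Proof. by case=> [[? ? ? ?] [? ? ? ?]]; rewrite /oconj /qconj /qopp /= !opprK. Qed.

Lemma co_sub_eq0 a b : co_sub fops a b = co_zero lam mu nu -> a = b.
Proof.
case: a b => [[? ? ? ?] [? ? ? ?]] [[? ? ? ?] [? ? ? ?]].
rewrite /co_sub /co_add /co_opp /cq_add /cq_opp /co_zero /co_scalar /=.
by case=> /subr0_eq -> /subr0_eq -> /subr0_eq -> /subr0_eq -> /subr0_eq -> /subr0_eq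
  -> /subr0_eq -> /subr0_eq ->.
Qed.

Lemma jmul_herm_of_ch x y :
  jmul lam mu nu (herm_of_ch x) (herm_of_ch y) = herm_of_ch (ch_jmul fops x y).
Proof.
apply/matrixP => i j; rewrite !mxE val_i0 val_i1 val_i2.
by rewrite (co_sub_eq0 (entry_field _ _ _ _ _ (ltn_ord i) (ltn_ord j))).
Qed.

Lemma herm_of_ch_hermitian x : Defs.hermitian (herm_of_ch x).
Proof.
move=> i j; rewrite !mxE.
have scalar_conj (a : F) : oconj (oct_of_co (co_scalar fops a)) = oct_of_co (co_scalar fops a).
  by rewrite /oconj /oct_of_co /co_scalar /qconj /qopp /= !oppr0.
by case: (ord3P i) => ->; case: (ord3P j) => ->; rewrite ?val_i0 ?val_i1 ?val_i2 /=;
  rewrite ?oct_of_co_conj ?oconjK ?scalar_conj.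
Qed.

Lemma herm_of_chK : cancel herm_of_ch ch_of_herm.
Proof.
move=> x; rewrite /ch_of_herm !mxE val_i0 val_i1 val_i2 /= !oct_of_coK.
by case: x => ? ? ? [[? ? ? ?] [? ? ? ?]] [[? ? ? ?] [? ? ? ?]] [[? ? ? ?] [? ? ? ?]].
Qed.

Lemma self_conj_scalar (u : oct F) :
  u = oconj u -> oct_of_co (co_scalar fops (q0 (ofst u))) = u.
Proof.
have eq_opp0 (z : F) : z = - z -> z = 0.
  move/eqP; rewrite -subr_eq0 opprK -mulr2n -mulr_natr mulf_eq0 (negbTE two_neq0) orbF.
  by move/eqP.
case: u => [[a b c d] [e f g h]]; rewrite /oconj /qconj /qopp /=.
by case=> /eq_opp0 -> /eq_opp0 -> /eq_opp0 -> /eq_opp0 -> /eq_opp0 -> /eq_opp0 -> /eq_opp0 ->.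
Qed.

Lemma ch_of_hermK X : Defs.hermitian X -> herm_of_ch (ch_of_herm X) = X.
Proof.
move=> hX; apply/matrixP => i j; rewrite mxE.
case: (ord3P i) => ->; case: (ord3P j) => ->; rewrite ?val_i0 ?val_i1 ?val_i2 /=;
  first [ by rewrite self_conj_scalar | by rewrite co_of_octK
        | by rewrite oct_of_co_conj co_of_octK [RHS]hX ].
Qed.

Definition row_of_herm (X : mat3) : 'rV[F]_27 := row_of_ch (ch_of_herm X).
Definition herm_of_row (r : 'rV[F]_27) : mat3 := herm_of_ch (ch_of_row r).

Lemma herm_of_rowK : cancel herm_of_row row_of_herm.
Proof. by move=> r; rewrite /row_of_herm /herm_of_row herm_of_chK ch_of_rowK. Qed.
Lemma row_of_hermK X : Defs.hermitian X -> herm_of_row (row_of_herm X) = X.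
Proof. by move=> hX; rewrite /row_of_herm /herm_of_row row_of_chK ch_of_hermK. Qed.
Lemma herm_of_row_hermitian r : Defs.hermitian (herm_of_row r).
Proof. exact: herm_of_ch_hermitian. Qed.
Lemma row_of_herm_inj X Y :
  Defs.hermitian X -> Defs.hermitian Y -> row_of_herm X = row_of_herm Y -> X = Y.
Proof. by move=> hX hY e; rewrite -(row_of_hermK hX) -(row_of_hermK hY) e. Qed.

Lemma hermitian_jmul X Y :
  Defs.hermitian X -> Defs.hermitian Y -> Defs.hermitian (jmul lam mu nu X Y).
Proof.
move=> hX hY; rewrite -(row_of_hermK hX) -(row_of_hermK hY) /herm_of_row jmul_herm_of_ch.
exact: herm_of_ch_hermitian.
Qed.
Lemma row_of_herm_jmul X Y : Defs.hermitian X -> Defs.hermitian Y ->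
  row_of_herm (jmul lam mu nu X Y) = jprod lam mu nu (row_of_herm X) (row_of_herm Y).
Proof.
move=> hX hY; rewrite -{1}(row_of_hermK hX) -{1}(row_of_hermK hY) /herm_of_row jmul_herm_of_ch.
by rewrite /row_of_herm herm_of_chK jprodE.
Qed.

Lemma row_of_herm_lin c X Y :
  row_of_herm (madd (mscale c X) Y) = c *: row_of_herm X + row_of_herm Y.
Proof. by rewrite /row_of_herm -(row_of_ch_lin lam mu nu) /ch_of_herm !mxE. Qed.
Lemma row_of_herm_sub X Y : row_of_herm (msub X Y) = row_of_herm X - row_of_herm Y.
Proof. by rewrite /row_of_herm -(row_of_ch_sub lam mu nu) /ch_of_herm !mxE. Qed.
Lemma row_of_herm_scale c X : row_of_herm (mscale c X) = c *: row_of_herm X.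
Proof. by rewrite /row_of_herm -(row_of_ch_scale lam mu nu) /ch_of_herm !mxE. Qed.
Lemma row_of_herm_one : row_of_herm (mone F) = jone lam mu nu.
Proof.
have [e12 e20 e01] : [/\ i1 == i2 = false, i2 == i0 = false & i0 == i1 = false].
  by rewrite -!val_eqE /= val_i0 val_i1 val_i2.
by rewrite /row_of_herm /jone /ch_of_herm !mxE !eqxx e12 e20 e01.
Qed.

Lemma oconj_add (a b : oct F) : oconj (oadd a b) = oadd (oconj a) (oconj b).
Proof.
by case: a b => [[? ? ? ?] [? ? ? ?]] [[? ? ? ?] [? ? ? ?]];
  rewrite /oadd /oconj /qconj /qopp /qadd /= !opprD.
Qed.
Lemma oconj_opp (a : oct F) : oconj (oopp a) = oopp (oconj a).
Proof. by case: a => [[? ? ? ?] [? ? ? ?]]. Qed.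
Lemma oconj_scale c (a : oct F) : oconj (oscale c a) = oscale c (oconj a).
Proof.
by case: a => [[? ? ? ?] [? ? ? ?]]; rewrite /oscale /oconj /qconj /qopp /qscale /= !mulrN.
Qed.

Lemma hermitian_madd (X Y : mat3) :
  Defs.hermitian X -> Defs.hermitian Y -> Defs.hermitian (madd X Y).
Proof. by move=> hX hY i j; rewrite !mxE oconj_add -hX -hY. Qed.
Lemma hermitian_msub (X Y : mat3) :
  Defs.hermitian X -> Defs.hermitian Y -> Defs.hermitian (msub X Y).
Proof. by move=> hX hY i j; rewrite !mxE /osub oconj_add oconj_opp -hX -hY. Qed.
Lemma hermitian_mscale c (X : mat3) : Defs.hermitian X -> Defs.hermitian (mscale c X).
Proof. by move=> hX i j; rewrite !mxE oconj_scale -hX. Qed.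

Lemma hermitian_Uop S X :
  Defs.hermitian S -> Defs.hermitian X -> Defs.hermitian (Uop lam mu nu S X).
Proof.
move=> hS hX; apply: hermitian_msub => //; apply: hermitian_mscale.
by do 2![apply: hermitian_jmul => //].
Qed.

Lemma row_of_herm_Uop S X : Defs.hermitian S -> Defs.hermitian X ->
  row_of_herm (Uop lam mu nu S X) = Usym (jprod lam mu nu) (row_of_herm S) (row_of_herm X).
Proof.
move=> hS hX; have hSX := hermitian_jmul hS hX.
by rewrite /Uop row_of_herm_sub row_of_herm_scale !row_of_herm_jmul // UsymE scaler_nat mulr2n.
Qed.

Lemma row_of_herm_symmetry S : Defs.symmetry lam mu nu S ->
  jprod lam mu nu (row_of_herm S) (row_of_herm S) = jone lam mu nu.
Proof. by case=> hS e; rewrite -row_of_herm_jmul // e row_of_herm_one. Qed.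

(** * Two-local 1-automorphisms *)

Hypotheses (lam0 : lam != 0) (mu0 : mu != 0) (nu0 : nu != 0).
Variable D : mat3 -> mat3.
Hypothesis D2local : two_local_1_automorphism lam mu nu D.

Local Notation jp := (jprod lam mu nu).
Local Notation B := (trace_form lam mu nu).
Local Notation G := (diag_mx (gram_row lam mu nu)).

Definition Drow (r : 'rV[F]_27) : 'rV[F]_27 := row_of_herm (D (herm_of_row r)).

Lemma Drow_2local a b :
  exists s, [/\ jp s s = jone lam mu nu, Drow a = Usym jp s a & Drow b = Usym jp s b].
Proof.
have [S [symS [Da Db]]] := D2local (herm_of_row_hermitian a) (herm_of_row_hermitian b).
have hS : Defs.hermitian S by case: symS.
exists (row_of_herm S); split; first exact: row_of_herm_symmetry.
- by rewrite /Drow Da row_of_herm_Uop ?herm_of_rowK //; exact: herm_of_row_hermitian.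
- by rewrite /Drow Db row_of_herm_Uop ?herm_of_rowK //; exact: herm_of_row_hermitian.
Qed.

Let jp_Usym := Usym_jm two_neq0 (jprodC lam mu nu) (@jprodZDl _ lam mu nu)
  (jprod1l lam mu nu two_neq0) (jprod_jordan_lin1 lam mu nu) (jprod_jordan_lin2 lam mu nu).
Let jtrace_Usym := tr_Usym_jm two_neq0 (jprodC lam mu nu) (@jprodZDl _ lam mu nu)
  (jprod1l lam mu nu two_neq0) (jprod_jordan_lin1 lam mu nu) (jprod_jordan_lin2 lam mu nu)
  (@jtraceZD _ lam mu nu) (jtrace_assoc lam mu nu).

Lemma Drow_isometry a b : B (Drow a) (Drow b) = B a b.
Proof. by have [s [s_sym -> ->]] := Drow_2local a b; rewrite -!jtrace_jprod jtrace_Usym. Qed.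

Lemma Drow_sq a : Drow (jp a a) = jp (Drow a) (Drow a).
Proof. by have [s [s_sym -> ->]] := Drow_2local a (jp a a); rewrite jp_Usym. Qed.

Definition Dmx : 'M[F]_27 := \matrix_(i, j) Drow (delta_mx 0 i) 0 j.

Lemma trace_form_Dmx w i : B w (Drow (delta_mx 0 i)) = (w *m G *m Dmx^T) 0 i.
Proof. by rewrite trace_formE mul_mx_diag !mxE; apply: eq_bigr => k _; rewrite !mxE. Qed.

Lemma Dmx_gram : Dmx *m G *m Dmx^T = G.
Proof.
apply/matrixP => i j.
have -> : (Dmx *m G *m Dmx^T) i j = B (Drow (delta_mx 0 i)) (Drow (delta_mx 0 j)).
  by rewrite trace_formE mul_mx_diag !mxE; apply: eq_bigr => k _; rewrite !mxE.
rewrite Drow_isometry trace_form_deltar !mxE eqxx /=.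
by case: (eqVneq i j) => [->|ne_ij]; rewrite ?eqxx ?mul1r ?mulr1n ?mul0r ?mulr0n.
Qed.

Lemma gram_unit : G \in unitmx.
Proof.
by rewrite unitmxE unitfE det_diag; apply/prodf_neq0 => k _; exact: gram_row_neq0.
Qed.

Lemma Dmx_unit : Dmx \in unitmx.
Proof.
have := gram_unit; rewrite -{1}Dmx_gram !unitmxE !det_mulmx det_tr !unitrM.
by case/andP => /andP[].
Qed.

Lemma Drow_nondeg w : (forall i, B w (Drow (delta_mx 0 i)) = 0) -> w = 0.
Proof.
move=> w0; have wGD0 : w *m G *m Dmx^T = 0 by apply/rowP => i; rewrite -trace_form_Dmx w0 mxE.
have wG0 : w *m G = 0.
  by rewrite -(mulmxK (_ : Dmx^T \in unitmx) (w *m G)) ?wGD0 ?mul0mx // unitmx_tr Dmx_unit.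
by rewrite -(mulmxK gram_unit w) wG0 mul0mx.
Qed.

Lemma Drow_lin c a b : Drow (c *: a + b) = c *: Drow a + Drow b.
Proof.
apply/eqP; rewrite -subr_eq0; apply/eqP; apply: Drow_nondeg => i.
by rewrite trace_formBl trace_formZDl !Drow_isometry trace_formZDl subrr.
Qed.

Lemma Drow_jprod a b : Drow (jp a b) = jp (Drow a) (Drow b).
Proof.
apply: (sq_morph_mul two_neq0 (jprodC lam mu nu) (@jprodZDl _ lam mu nu)); last exact: Drow_sq.
by move=> u v; rewrite -[u]scale1r Drow_lin !scale1r.
Qed.

Lemma Drow_inj : injective Drow.
Proof.
move=> a b e; apply/eqP; rewrite -subr_eq0; apply/eqP.
apply: (trace_form_nondeg two_neq0 lam0 mu0 nu0) => i.
by rewrite trace_formBl -(Drow_isometry a) -(Drow_isometry b) e subrr.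
Qed.

(* A preimage of y, read off from its coordinates in the basis (Drow e_i). *)
Lemma Drow_surj y : exists r, Drow r = y.
Proof.
set c := y *m G *m Dmx^T *m invmx G; exists c.
apply/eqP; rewrite -subr_eq0; apply/eqP; apply: Drow_nondeg => i.
have cG : (c *m G) 0 i = c 0 i * gram_row lam mu nu 0 i by rewrite mul_mx_diag mxE.
rewrite trace_formBl Drow_isometry trace_form_deltar trace_form_Dmx -cG.
by rewrite (mulmxKV gram_unit) subrr.
Qed.

Lemma D_hermitian X : Defs.hermitian X -> Defs.hermitian (D X).
Proof.
move=> hX; have [S [[hS _] [-> _]]] := D2local hX hX.
exact: hermitian_Uop.
Qed.

Lemma row_of_herm_D X : Defs.hermitian X -> row_of_herm (D X) = Drow (row_of_herm X).
Proof. by move=> hX; rewrite /Drow row_of_hermK. Qed.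

Lemma D_linear c X Y : Defs.hermitian X -> Defs.hermitian Y ->
  D (madd (mscale c X) Y) = madd (mscale c (D X)) (D Y).
Proof.
move=> hX hY; have hXY : Defs.hermitian (madd (mscale c X) Y).
  by apply: hermitian_madd => //; exact: hermitian_mscale.
have hDXY : Defs.hermitian (madd (mscale c (D X)) (D Y)).
  by apply: hermitian_madd; [apply: hermitian_mscale |]; exact: D_hermitian.
apply: row_of_herm_inj => //; first exact: D_hermitian.
by rewrite row_of_herm_D // !row_of_herm_lin !row_of_herm_D // Drow_lin.
Qed.

Lemma D_jmul X Y : Defs.hermitian X -> Defs.hermitian Y ->
  D (jmul lam mu nu X Y) = jmul lam mu nu (D X) (D Y).
Proof.
move=> hX hY; have hXY := hermitian_jmul hX hY.
have hDX := D_hermitian hX; have hDY := D_hermitian hY.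
apply: row_of_herm_inj; [exact: D_hermitian | exact: hermitian_jmul |].
by rewrite row_of_herm_D // !row_of_herm_jmul // Drow_jprod -!row_of_herm_D.
Qed.

Lemma D_inj X Y : Defs.hermitian X -> Defs.hermitian Y -> D X = D Y -> X = Y.
Proof.
move=> hX hY e; apply: row_of_herm_inj => //.
by apply: Drow_inj; rewrite -!row_of_herm_D // e.
Qed.

Lemma D_surj Y : Defs.hermitian Y -> exists2 X, Defs.hermitian X & D X = Y.
Proof.
move=> hY; have [r Dr] := Drow_surj (row_of_herm Y).
have hX := herm_of_row_hermitian r.
by exists (herm_of_row r) => //; apply: row_of_herm_inj => //; exact: D_hermitian.
Qed.
End HermitianCoordinates.

Theorem theorem4p8 (F : closedFieldType) (lam mu nu : F)
  (hlam : lam != 0) (hmu : mu != 0) (hnu : nu != 0)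
  (hchar : (2%:R : F) != 0)
  (D : mat3 F -> mat3 F) :
  two_local_1_automorphism lam mu nu D -> jordan_automorphism lam mu nu D.
Proof.
move=> D2local; split.
- exact: (D_hermitian hchar D2local).
- exact: (D_linear hchar hlam hmu hnu D2local).
- exact: (D_jmul hchar hlam hmu hnu D2local).
- exact: (D_inj hchar hlam hmu hnu D2local).
- exact: (D_surj hchar hlam hmu hnu D2local).
Qed.
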